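(* Let $q=p^s$ with $p$ prime, $R_T=\mathbb{F}_q[T]$, $P\in R_T$ monic irreducible of degree $d$. For $m\ge1$ and $\beta\in\mathbb{N}$ let $v_m(\beta)$ be the number of distinct cyclic subgroups of order $p^m$ of $(R_T/(P^{\beta}))^{\ast}$. Let $n\geq 2$, $\alpha\in\mathbb{N}$ and $\delta=\left[\frac{\alpha-1}{p}\right]+1$. Then \[ v_n(\alpha)=\frac{q^{d\left(\alpha-\lceil\alpha/p\rceil\right)}}{p}\,v_{n-1}(\delta). \]
   Context: $[x]$ denotes the floor and $\lceil x\rceil$ the ceiling of a real number $x$. *)

From HB Require Import structures.
From mathcomp Require Import all_boot all_order all_algebra all_fingroup all_solvable all_field.
Set Implicit Arguments. Unset Strict Implicit. Unset Printing Implicit Defensive.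
Import GRing.Theory.
Local Open Scope ring_scope.

(* The ring R_T/(Q) for Q : {poly F} is mathcomp's {poly %/ Q} (qpoly.v);
   its unit group (R_T/(Q))^* is the finite group {unit {poly %/ Q}}. *)

(* v_m(beta) : number of distinct cyclic subgroups of order p^m of
   (F[T]/(P^beta))^*.  Every cyclic subgroup is <[u]> for some unit u,
   and |<[u]>| = #[u]. *)
Definition ncyc_subgroups (F : finFieldType) (P : {poly F}) (p m beta : nat) : nat :=
  #|[set (<[u]>)%g | u in [set u : {unit {poly %/ P ^+ beta}} | #[u]%g == (p ^ m)%N]]|.

From HB Require Import structures.
From mathcomp Require Import all_boot all_order all_algebra all_fingroup all_solvable all_field.
From mathcomp Require Import zify.
Set Implicit Arguments.
Unset Strict Implicit.
Unset Printing Implicit Defensive.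
Import GRing.Theory Num.Theory FinRing.Theory.

(* Since char F = p, the map f |-> f^p is additive on F[T], and P^alpha divides
   f^p exactly when P^delta divides f, delta being the ceiling of alpha/p.  Hence
   x |-> x^p induces an injective ring map R_T/(P^delta) -> R_T/(P^alpha) whose
   image is the set of p-th powers; on units it identifies (R_T/(P^delta))^* with
   the p-th powers of the abelian group G = (R_T/(P^alpha))^*.  For n >= 2, g has
   order p^n iff g^p has order p^(n-1), and the fibres of g |-> g^p are cosets of
   {g | g^p = 1}, which g |-> g - 1 maps onto {a | a^p = 0} = P^delta R_T/(P^alpha),
   a set of size q^(d(alpha-delta)).  Counting elements of order p^n this way and
   dividing by phi(p^n) = p phi(p^(n-1)) counts the cyclic subgroups. *)


Local Open Scope group_scope.

Section OrderCounting.

Variable gT : finGroupType.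

Lemma card_order_eq_cycles_totient (N : nat) :
  #|[set x : gT | #[x] == N]| =
  (#|[set <[x]> | x in [set x : gT | #[x] == N]]| * totient N)%N.
Proof.
rewrite -sum1_card (partition_big_imset cycle) /= -sum_nat_const.
apply: eq_bigr => C /imsetP [x]; rewrite inE => /eqP oxN ->.
rewrite sum1dep_card -oxN totient_gen; apply: eq_card => y.
rewrite !inE /generator [X in _ = X]eq_sym.
have [e|ne] := eqVneq <[y]> <[x]>; last by rewrite andbF.
by rewrite /order e !eqxx.
Qed.

Lemma order_expg_prime_pexp (p n : nat) (g : gT) : prime p -> (1 < n)%N ->
  (#[g] == p ^ n)%N = (#[g ^+ p] == p ^ n.-1)%N.
Proof.
move=> p_pr; case: n => [|[|n]] // _ /=; rewrite orderXgcd.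
have p_gt1 := prime_gt1 p_pr.
have [p_dvd|p_ndvd] := boolP (p %| #[g])%N.
  rewrite (eqP (_ : gcdn #[g] p == p)); last by rewrite gcdnC; apply/eqP/gcdn_idPl.
  apply/eqP/eqP => [->|og]; first by rewrite expnS mulKn // ltnW.
  by rewrite -(divnK p_dvd) og -expnSr.
rewrite (eqP (_ : coprime #[g] p)) ?divn1; last by rewrite coprime_sym prime_coprime.
by apply/eqP/eqP => og; move: p_ndvd; rewrite og expnS dvdn_mulr.
Qed.

Lemma card_expg_fiber (p : nat) (g0 : gT) : abelian [set: gT] ->
  #|[set g : gT | g ^+ p == g0 ^+ p]| = #|[set k : gT | k ^+ p == 1]|.
Proof.
move=> /centsP cGG; have cG (x y : gT) : commute x y by exact: cGG (in_setT x) y (in_setT y).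
rewrite -(card_imset _ (mulIg g0^-1)); apply: eq_card => g.
apply/imsetP/idP => [[k + ->] | ]; rewrite !inE => /eqP gp.
- by rewrite expgMn // gp expgVn mulgV.
- exists (g * g0); last by rewrite mulgK.
  by rewrite inE expgMn // gp mul1g.
Qed.

Lemma order_injective_morph (hT : finGroupType) (f : hT -> gT) (x : hT) :
  {morph f : u v / u * v} -> injective f -> #[f x] = #[x].
Proof.
move=> fM f_inj; pose fm := @Morphism _ _ [set: hT] f (in2W fM).
have injfm : 'injm fm by apply/injmP; exact: in2W.
exact: (order_injm injfm (in_setT x)).
Qed.

Lemma card_order_pexpS (hT : finGroupType) (p n : nat) (f : hT -> gT) :
  prime p -> (1 < n)%N -> abelian [set: gT] ->
  {morph f : x y / x * y} -> injective f ->
  [set f h | h : hT] = [set g ^+ p | g : gT] ->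
  #|[set g : gT | #[g] == (p ^ n)%N]| =
  (#|[set k : gT | k ^+ p == 1%g]| * #|[set h : hT | #[h] == (p ^ n.-1)%N]|)%N.
Proof.
move=> p_pr n_gt1 cGG fM f_inj im_f; set S := [set h : hT | _].
have ord_f h : #[f h] = #[h] by exact: order_injective_morph.
have -> : [set g : gT | #[g] == (p ^ n)%N] = [set g | g ^+ p \in f @: S].
  apply/setP => g; rewrite !inE order_expg_prime_pexp //.
  apply/idP/imsetP => [og | [h + ->]]; last by rewrite inE ord_f.
  have /imsetP[h _ gpE] : g ^+ p \in [set f h | h : hT] by rewrite im_f; apply: imset_f.
  by exists h; rewrite // inE -ord_f -gpE.
rewrite -(card_imset S f_inj) mulnC -sum_nat_const -sum1_card.
rewrite (partition_big (fun g => g ^+ p) (mem (f @: S))) => /= [|g]; last by rewrite inE.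
apply: eq_bigr => _ /imsetP[h hS ->].
have /imsetP[g0 _ fhE] : f h \in [set g ^+ p | g : gT] by rewrite -im_f; apply: imset_f.
rewrite fhE -(card_expg_fiber p g0 cGG) -sum1_card; apply: eq_bigl => g.
by rewrite !inE andb_idl // => /eqP ->; rewrite -fhE; apply: imset_f.
Qed.

End OrderCounting.

Local Close Scope group_scope.
Local Open Scope ring_scope.

Section IrreducibleDivisibility.

Variables (F : fieldType) (P : {poly F}).
Hypothesis P_irr : irreducible_poly P.

Lemma irredp_dvdp_expr (f : {poly F}) (n : nat) : P %| f ^+ n -> P %| f.
Proof.
by apply: contraTT; rewrite -!irreducible_poly_coprime //; apply: coprimep_expr.
Qed.

Lemma irredp_dvdp_exp_expr (a b p : nat) (f : {poly F}) :
  (b.-1 * p < a)%N -> P ^+ a %| f ^+ p -> P ^+ b %| f.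
Proof.
have P_neq0 : P != 0 by apply: irredp_neq0.
elim: b a f => [|b IHb] a f lt_a PaDfp; first by rewrite expr0 dvd1p.
have /dvdpP[g fE] : P %| f.
  apply: (@irredp_dvdp_expr _ p); apply: dvdp_trans PaDfp.
  by rewrite -{1}(expr1 P) dvdp_exp2l //; case: a lt_a.
rewrite fE exprSr dvdp_mul2r //; case: b IHb lt_a => [|b] IHb lt_a.
  by rewrite expr0 dvd1p.
apply: (IHb (a - p)%N); first by move: lt_a => /=; lia.
by move: PaDfp; rewrite fE exprMn dvdp_exp_sub.
Qed.

Lemma irredp_dvdp_exp_exprE (a b p : nat) (f : {poly F}) :
  (b.-1 * p < a <= b * p)%N -> (P ^+ a %| f ^+ p) = (P ^+ b %| f).
Proof.
case/andP=> lt_a le_a; apply/idP/idP; first exact: irredp_dvdp_exp_expr.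
by move/(dvdp_exp2r p); apply: dvdp_trans; rewrite -exprM dvdp_exp2l.
Qed.

End IrreducibleDivisibility.

Section CharacteristicPower.

Variables (R : comNzRingType) (p : nat).
Hypothesis p_char : p \in [pchar R].

Lemma exprD_pchar (x y : R) : (x + y) ^+ p = x ^+ p + y ^+ p.
Proof. by rewrite -!(pFrobenius_autE p_char) pFrobenius_autD_comm //; apply: mulrC. Qed.

Lemma exprB_pchar (x y : R) : (x - y) ^+ p = x ^+ p - y ^+ p.
Proof. by rewrite -!(pFrobenius_autE p_char) pFrobenius_autB_comm //; apply: mulrC. Qed.

End CharacteristicPower.

Lemma card_unit_expr_eq1_pchar (R : finComUnitRingType) (p : nat) :
  p \in [pchar R] ->
  #|[set u : {unit R} | (u ^+ p == 1)%g]| = #|[set a : R | a ^+ p == 0]|.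
Proof.
move=> p_char; have p_gt0 := prime_gt0 (pcharf_prime p_char).
pose dec (u : {unit R}) : R := val u - 1.
have dec_inj : injective dec by move=> u v /addIr /val_inj.
rewrite -(card_imset _ dec_inj); apply: eq_card => a; apply/imsetP/idP.
  move=> [u]; rewrite !inE => /eqP up1 ->.
  by rewrite exprB_pchar // -val_unitX up1 val_unit1 expr1n subrr.
rewrite inE => /eqP ap0.
have a1p : (1 + a) ^+ p = 1 by rewrite exprD_pchar // expr1n ap0 addr0.
have u1a : 1 + a \is a GRing.unit by rewrite -(unitrX_pos _ p_gt0) a1p unitr1.
exists (FinRing.Unit u1a); last by rewrite /dec /= addrAC subrr add0r.
by rewrite inE; apply/eqP/val_inj; rewrite val_unitX /= a1p.
Qed.

Lemma in_qpoly_val (R : nzRingType) (h : {poly R}) (x : {poly %/ h}) :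
  in_qpoly h (val x) = x.
Proof. by apply: val_inj; apply: in_qpoly_small (size_mk_monic x). Qed.

Lemma in_qpolyXn (R : comNzRingType) (h u : {poly R}) (n : nat) :
  in_qpoly h (u ^+ n) = in_qpoly h u ^+ n.
Proof. exact: rmorphXn. Qed.

Section QuotientByMonic.

Variables (R : fieldType) (h : {poly R}).
Hypotheses (h_monic : h \is monic) (h_gt1 : (1 < size h)%N).

Lemma mk_monic_id : mk_monic h = h.
Proof. by rewrite /mk_monic h_gt1 h_monic. Qed.

Lemma eq_in_qpoly (u v : {poly R}) :
  (in_qpoly h u == in_qpoly h v) = (h %| u - v).
Proof.
rewrite -val_eqE /= -!Pdiv.IdomainMonic.modpE ?monic_mk_monic // mk_monic_id.
by rewrite /dvdp modpD modpN subr_eq0.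
Qed.

End QuotientByMonic.

Lemma card_qpoly_dvdp (F : finFieldType) (M N : {poly F}) :
  M \is monic -> (1 < size M)%N -> N != 0 -> (size N <= size M)%N ->
  #|[set a : {poly %/ M} | N %| val a]| = (#|F| ^ (size M - size N))%N.
Proof.
move=> M_monic M_gt1 N_neq0 le_NM; set k := (size M - size N)%N.
have N_gt0 : (0 < size N)%N by rewrite size_poly_gt0.
have sizeM : size M = (size N + k)%N by rewrite subnKC.
pose mulN (g : {poly_k F}) : {poly %/ M} := in_qpoly M (N * g).
have mulNE g : val (mulN g) = N * g.
  apply: in_qpoly_small; rewrite mk_monic_id //.
  apply: leq_ltn_trans (size_polyMleq _ _) _.
  by rewrite prednK ?addn_gt0 ?N_gt0 // sizeM leq_add2l size_npoly.
have mulN_inj : injective mulN.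
  by move=> g g' /(congr1 val); rewrite !mulNE => /(mulfI N_neq0) /val_inj.
rewrite -[RHS]card_npoly -cardsT -(card_imset _ mulN_inj); apply: eq_card => a.
rewrite inE; apply/idP/imsetP => [NDa | [g _ ->]]; last by rewrite mulNE dvdp_mulIl.
have size_quo : (size (val a %/ N)%R <= k)%N.
  have := size_mk_monic a; rewrite [in X in (_ < X)%N]mk_monic_id //.
  rewrite size_divp // sizeM.
  by rewrite -(prednK N_gt0) addSn ltnS leq_subLR.
exists (npolyp k (val a %/ N)); rewrite ?inE //.
by apply: val_inj; rewrite mulNE npolypK // divpKC.
Qed.

Lemma units_abelian (R : finComUnitRingType) : abelian [set: {unit R}].
Proof. by apply/centsP => u _ v _; apply: val_inj; apply: mulrC. Qed.

Section FrobeniusQuotient.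

Variables (F : finFieldType) (M N : {poly F}) (p : nat).
Hypotheses (M_monic : M \is monic) (N_monic : N \is monic) (N_gt1 : (1 < size N)%N).
Hypothesis p_char : p \in [pchar F].
Hypothesis dvdp_expr_pchar : forall f : {poly F}, (M %| f ^+ p) = (N %| f).

Let p_gt0 : (0 < p)%N. Proof. exact/prime_gt0/(pcharf_prime p_char). Qed.
Let p_char_poly : p \in [pchar {poly F}]. Proof. by rewrite pchar_poly. Qed.

Let N_dvd_M : N %| M.
Proof. by rewrite -dvdp_expr_pchar dvdp_exp. Qed.

Let N_le_M : (size N <= size M)%N.
Proof. by apply: dvdp_leq N_dvd_M; apply: monic_neq0. Qed.

Let M_gt1 : (1 < size M)%N. Proof. exact: leq_trans N_le_M. Qed.

Definition frob_qpoly (x : {poly %/ N}) : {poly %/ M} := in_qpoly M (val x ^+ p).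
Definition reduce_qpoly (y : {poly %/ M}) : {poly %/ N} := in_qpoly N (val y).

Lemma in_qpoly_expr_pchar_eq (u v : {poly F}) :
  (in_qpoly M (u ^+ p) == in_qpoly M (v ^+ p)) = (in_qpoly N u == in_qpoly N v).
Proof. by rewrite !eq_in_qpoly // -exprB_pchar. Qed.

Lemma frob_qpolyM x y : frob_qpoly (x * y) = frob_qpoly x * frob_qpoly y.
Proof.
apply/eqP; rewrite /frob_qpoly -in_qpolyM -exprMn in_qpoly_expr_pchar_eq.
by rewrite in_qpolyM !in_qpoly_val.
Qed.

Lemma frob_qpoly1 : frob_qpoly 1 = 1.
Proof. by rewrite /frob_qpoly expr1n in_qpoly1. Qed.

Lemma frob_qpoly_inj : injective frob_qpoly.
Proof. by move=> x y /eqP; rewrite in_qpoly_expr_pchar_eq !in_qpoly_val => /eqP. Qed.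

Lemma frob_qpolyE x : frob_qpoly x = in_qpoly M (val x) ^+ p.
Proof. exact: in_qpolyXn. Qed.

Lemma frob_reduce_qpoly y : frob_qpoly (reduce_qpoly y) = y ^+ p.
Proof.
apply/eqP; rewrite -[y in _ == y ^+ _]in_qpoly_val -in_qpolyXn.
by rewrite in_qpoly_expr_pchar_eq !in_qpoly_val.
Qed.

Lemma reduce_qpolyM x y : reduce_qpoly (x * y) = reduce_qpoly x * reduce_qpoly y.
Proof.
apply/eqP; rewrite -in_qpolyM eq_in_qpoly //; apply: dvdp_trans N_dvd_M _.
by rewrite -eq_in_qpoly // in_qpolyM !in_qpoly_val.
Qed.

Lemma reduce_qpoly1 : reduce_qpoly 1 = 1.
Proof. exact: in_qpoly1. Qed.

Lemma frob_qpoly_unit x : x \is a GRing.unit -> frob_qpoly x \is a GRing.unit.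
Proof.
move=> ux; apply/unitrPr; exists (frob_qpoly x^-1).
by rewrite -frob_qpolyM mulrV ?frob_qpoly1.
Qed.

Lemma reduce_qpoly_unit y : y \is a GRing.unit -> reduce_qpoly y \is a GRing.unit.
Proof.
move=> uy; apply/unitrPr; exists (reduce_qpoly y^-1).
by rewrite -reduce_qpolyM mulrV ?reduce_qpoly1.
Qed.

Definition frob_unit (u : {unit {poly %/ N}}) : {unit {poly %/ M}} :=
  FinRing.Unit (frob_qpoly_unit (valP u)).

Lemma frob_unitM : {morph frob_unit : u v / (u * v)%g}.
Proof. by move=> u v; apply: val_inj; apply: frob_qpolyM. Qed.

Lemma frob_unit_inj : injective frob_unit.
Proof. by move=> u v /(congr1 val) /frob_qpoly_inj /val_inj. Qed.

Lemma image_frob_unit :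
  [set frob_unit u | u : {unit {poly %/ N}}] = [set (v ^+ p)%g | v : {unit {poly %/ M}}].
Proof.
apply/setP => w; apply/imsetP/imsetP => [[u _ ->] | [v _ ->]].
  have lift_unit : in_qpoly M (val (val u)) \is a GRing.unit.
    by rewrite -(unitrX_pos _ p_gt0) -frob_qpolyE frob_qpoly_unit ?(valP u).
  by exists (FinRing.Unit lift_unit) => //; apply: val_inj; rewrite val_unitX /= frob_qpolyE.
exists (FinRing.Unit (reduce_qpoly_unit (valP v))) => //.
by apply: val_inj; rewrite val_unitX /= frob_reduce_qpoly.
Qed.

Lemma card_unit_expr_eq1_qpoly :
  #|[set v : {unit {poly %/ M}} | (v ^+ p == 1)%g]| = (#|F| ^ (size M - size N))%N.
Proof.
rewrite card_unit_expr_eq1_pchar ?pchar_qpoly // -card_qpoly_dvdp ?monic_neq0 //.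
apply: eq_card => a; rewrite !inE -[a in a ^+ p]in_qpoly_val -in_qpolyXn.
by rewrite -(in_qpoly0 M) eq_in_qpoly // subr0 dvdp_expr_pchar.
Qed.

Lemma card_order_pexpS_qpoly (n : nat) : (1 < n)%N ->
  #|[set v : {unit {poly %/ M}} | #[v]%g == (p ^ n)%N]| =
  (#|F| ^ (size M - size N) * #|[set u : {unit {poly %/ N}} | #[u]%g == (p ^ n.-1)%N]|)%N.
Proof.
move=> n_gt1; rewrite -card_unit_expr_eq1_qpoly.
exact: card_order_pexpS (pcharf_prime p_char) n_gt1 (units_abelian _)
  frob_unitM frob_unit_inj image_frob_unit.
Qed.

End FrobeniusQuotient.

Lemma totient_pexp (p n : nat) : prime p -> (1 < n)%N ->
  totient (p ^ n) = (p * totient (p ^ n.-1))%N.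
Proof.
by case: n => [|[|n]] // p_pr _; rewrite !totient_pfactor //= mulnCA -expnS.
Qed.

Lemma ceil_div_predE (a p : nat) : (0 < a)%N -> (0 < p)%N ->
  ((a + p - 1) %/ p = (a - 1) %/ p + 1)%N.
Proof. by move=> a_gt0 p_gt0; rewrite -addnBAC // -{1}[p]mul1n divnDMl. Qed.

Lemma ceil_div_pred_bounds (a p : nat) : (0 < a)%N -> (0 < p)%N ->
  ((a - 1) %/ p * p < a <= ((a - 1) %/ p).+1 * p)%N.
Proof.
by move=> a_gt0 p_gt0; have := divn_eq (a - 1) p; have := ltn_pmod (a - 1) p_gt0; lia.
Qed.

Theorem proposition5p5 (F : finFieldType) (p s : nat) (P : {poly F}) (n alpha : nat) :
  prime p -> #|F| = (p ^ s)%N ->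
  P \is monic -> irreducible_poly P ->
  (2 <= n)%N -> (1 <= alpha)%N ->
  let q := #|F| in
  let d := (size P).-1 in
  let delta := ((alpha - 1) %/ p + 1)%N in
  let ceil_alpha_p := ((alpha + p - 1) %/ p)%N in
  ((ncyc_subgroups P p n alpha)%:R : rat)
    = (q ^ (d * (alpha - ceil_alpha_p)))%:R / p%:R
        * (ncyc_subgroups P p n.-1 delta)%:R.
Proof.
move=> p_pr card_F P_monic P_irr n_gt1 alpha_gt0 q d delta ceil_alpha_p.
have p_gt0 := prime_gt0 p_pr.
have p_char : p \in [pchar F] := card_finPcharP card_F p_pr.
have -> : ceil_alpha_p = delta by apply: ceil_div_predE.
have delta_bounds : (delta.-1 * p < alpha <= delta * p)%N.
  by rewrite /delta addn1; apply: ceil_div_pred_bounds.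
have size_Pexp b : size (P ^+ b) = (d * b).+1.
  by rewrite -size_exp prednK // size_poly_gt0 expf_neq0 ?irredp_neq0.
have d_gt0 : (0 < d)%N by rewrite /d -subn1 subn_gt0; case: P_irr.
have delta_gt0 : (0 < delta)%N by rewrite /delta addn1.
have dvdp_frob f : (P ^+ alpha %| f ^+ p) = (P ^+ delta %| f).
  exact: irredp_dvdp_exp_exprE.
have Pdelta_gt1 : (1 < size (P ^+ delta))%N by rewrite size_Pexp ltnS muln_gt0 d_gt0.
have := card_order_pexpS_qpoly (monic_exp alpha P_monic) (monic_exp delta P_monic)
  Pdelta_gt1 p_char dvdp_frob n_gt1.
rewrite !card_order_eq_cycles_totient totient_pexp // !size_Pexp subSS -mulnBr.
rewrite mulnCA mulnA [in X in _ = X]mulnA => /eqP.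
rewrite eqn_pmul2r ?totient_gt0 ?expn_gt0 ?p_gt0 // => /eqP count_eq.
have p_neq0 : (p%:R : rat) != 0 by rewrite pnatr_eq0 -lt0n.
by apply: (mulIf p_neq0); rewrite mulrAC divfK // -!natrM mulnC count_eq.
Qed.
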